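(* The comodule configuration $u:\mathbb B_{\bullet,0}\to\mathbf I$ is complete: defining $t_{\top+1}:\mathbb B_{i,j}\to\mathbb B_{i+1,j}$ by moving the discrete part of the bottom layer of the poset (the elements of the first poset layer comparable to no other element of $P$) into a new top layer of the set, the maps $t_{\top+1}$ are sections of the top vertical face maps $e_\top=e_{i+1}:\mathbb B_{i+1,j}\to\mathbb B_{i,j}$ and are monomorphisms of groupoids; they provide a left pointing.
   Context: For $n\ge0$, $\underline n=\{1,\dots,n\}$. $\mathbf I$ is the simplicial groupoid of layered finite sets ($\mathbf I_n$: maps $S\to\underline n$, $S$ a finite set). For $i,j\ge0$, $\mathbb B_{i,j}$ is the groupoid of pairs $(a:S\to\underline i,\ b:P\to\underline{j+1})$ with $S$ a finite set and $P$ a finite poset with monotone layering $b$, morphisms pairs of isomorphisms over the layerings. Vertical maps: $e_0:\mathbb B_{i,j}\to\mathbb B_{i-1,j}$ deletes the first set layer, $e_k$ ($0<k<i$) joins set layers $k,k+1$, and the top face map $e_i$ removes the last set layer and adds its elements, discretely ordered and incomparable with all of $P$, to the first poset layer; $t_k$ inserts an empty $(k+1)$st set layer. The augmentation $u:\mathbb B_{i,0}\to\mathbf I_i$ deletes the poset. A comodule configuration is a culf map from a Segal groupoid to a decomposition space; it is left pointed if equipped with extra top degeneracy maps $t_{\top+1}$ that are sections of the top face maps $e_\top$, and complete if these are monomorphisms (maps of groupoids whose homotopy fibres are empty or contractible). *)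

(* Layers {1,..,n} are encoded as 'I_n = {0,..,n-1}. *)
From mathcomp Require Import all_boot.
Set Warnings "-notation-overridden".

(* Objects of B_{i,j}: a finite set S layered over {1..i}, and a finite
   poset P with a monotone layering over {1..j+1}.                     *)
Record BObj (i j : nat) := {
  bS : finType;
  bA : bS -> 'I_i;
  bP : finType;
  ble : rel bP;
  ble_refl : reflexive ble;
  ble_anti : antisymmetric ble;
  ble_trans : transitive ble;
  bB : bP -> 'I_j.+1;
  bB_mono : forall p q, ble p q -> bB p <= bB q }.
Arguments bS {i j} _.
Arguments bA {i j} _ _.
Arguments bP {i j} _.
Arguments ble {i j} _ _ _.
Arguments bB {i j} _ _.

Record BHom (i j : nat) (X Y : BObj i j) := {
  hS : bS X -> bS Y;
  hSinv : bS Y -> bS X;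
  hS_K : cancel hS hSinv;
  hS_K' : cancel hSinv hS;
  hS_a : forall s, bA Y (hS s) = bA X s;
  hP : bP X -> bP Y;
  hPinv : bP Y -> bP X;
  hP_K : cancel hP hPinv;
  hP_K' : cancel hPinv hP;
  hP_b : forall p, bB Y (hP p) = bB X p;
  hP_le : forall p q, ble Y (hP p) (hP q) = ble X p q }.

Arguments BHom {i j} X Y.
Arguments hS {i j X Y} _ _.
Arguments hSinv {i j X Y} _ _.
Arguments hP {i j X Y} _ _.
Arguments hPinv {i j X Y} _ _.
Arguments hS_K {i j X Y} _ _.
Arguments hS_K' {i j X Y} _ _.
Arguments hS_a {i j X Y} _ _.
Arguments hP_K {i j X Y} _ _.
Arguments hP_K' {i j X Y} _ _.
Arguments hP_b {i j X Y} _ _.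
Arguments hP_le {i j X Y} _ _ _.
Arguments ble_refl {i j} _ _.
Arguments ble_anti {i j} _ _ _ _.
Arguments ble_trans {i j} _ _ _ _ _ _.
Arguments bB_mono {i j} _ _ _ _.

Definition heq (i j : nat) (X Y : BObj i j) (f g : BHom X Y) : Prop :=
  (forall s, hS f s = hS g s) /\ (forall p, hP f p = hP g p).
Arguments heq {i j X Y} _ _.

Lemma hS_inv_a i j (X Y : BObj i j) (f : BHom X Y) y : bA X (hSinv f y) = bA Y y.
Proof. by rewrite -(hS_a f) hS_K'. Qed.
Lemma hP_inv_b i j (X Y : BObj i j) (f : BHom X Y) y : bB X (hPinv f y) = bB Y y.
Proof. by rewrite -(hP_b f) hP_K'. Qed.
Lemma hP_inv_le i j (X Y : BObj i j) (f : BHom X Y) p q :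
  ble X (hPinv f p) (hPinv f q) = ble Y p q.
Proof. by rewrite -(hP_le f) !hP_K'. Qed.

Lemma sig_eqE (T : Type) (P : T -> bool) (u v : {x : T | P x}) :
  sval u = sval v -> u = v.
Proof.
case: u v => [x px] [y py] /= E; subst y; congr exist; exact: bool_irrelevance.
Qed.

Definition hcomp (i j : nat) (X Y Z : BObj i j) (g : BHom Y Z) (f : BHom X Y)
  : BHom X Z.
Proof.
refine (@Build_BHom i j X Z (hS g \o hS f) (hSinv f \o hSinv g) _ _ _
                            (hP g \o hP f) (hPinv f \o hPinv g) _ _ _ _).
- by move=> s /=; rewrite !hS_K.
- by move=> s /=; rewrite !hS_K'.
- by move=> s /=; rewrite !hS_a.
- by move=> s /=; rewrite !hP_K.
- by move=> s /=; rewrite !hP_K'.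
- by move=> s /=; rewrite !hP_b.
- by move=> p q /=; rewrite !hP_le.
Defined.
Arguments hcomp {i j X Y Z} _ _.

(* Top vertical face map e_top = e_{i+1} : B_{i+1,j} -> B_{i,j}:
   removes the last set layer and adds its elements, discretely ordered
   and incomparable with all of P, to the first poset layer.           *)
Section ETop.
Variables i j : nat.

Definition eS (X : BObj i.+1 j) : finType := {x : bS X | (bA X x : nat) < i}.
Definition eLast (X : BObj i.+1 j) : finType := {x : bS X | (bA X x : nat) == i}.
Definition eP (X : BObj i.+1 j) : finType := (bP X + eLast X)%type.

Definition eA (X : BObj i.+1 j) (x : eS X) : 'I_i := Ordinal (valP x).

Definition ele (X : BObj i.+1 j) : rel (eP X) := fun u v =>
  match u, v with
  | inl p, inl q => ble X p q
  | inr x, inr y => x == y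
  | _, _ => false
  end.

Definition eB (X : BObj i.+1 j) (u : eP X) : 'I_j.+1 :=
  match u with inl p => bB X p | inr _ => ord0 end.

Definition eObj (X : BObj i.+1 j) : BObj i j.
Proof.
refine (@Build_BObj i j (eS X) (@eA X) (eP X) (@ele X) _ _ _ (@eB X) _).
- by case=> [p|x] /=; [apply: ble_refl|].
- case=> [p|x] [q|y] //=; first by move=> H; congr inl; apply: ble_anti.
  by case/andP=> /eqP -> _.
- case=> [p|x] [q|y] [r|z] //=; first by apply: ble_trans.
  by move=> /eqP -> /eqP ->.
- case=> [p|x] [q|y] //=; first by apply: bB_mono.
Defined.

Lemma eS_pf (X Y : BObj i.+1 j) (f : BHom X Y) (x : bS X) (P : pred nat) :
  P (bA X x) -> P (bA Y (hS f x)).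
Proof. by rewrite hS_a. Qed.
Lemma eS_pf' (X Y : BObj i.+1 j) (f : BHom X Y) (y : bS Y) (P : pred nat) :
  P (bA Y y) -> P (bA X (hSinv f y)).
Proof. by rewrite hS_inv_a. Qed.

Definition eHom (X Y : BObj i.+1 j) (f : BHom X Y) : BHom (eObj X) (eObj Y).
Proof.
pose fS (x : eS X) : eS Y :=
  exist _ (hS f (sval x)) (@eS_pf X Y f (sval x) (fun n => n < i) (proj2_sig x)).
pose gS (y : eS Y) : eS X :=
  exist _ (hSinv f (sval y)) (@eS_pf' X Y f (sval y) (fun n => n < i) (proj2_sig y)).
pose fL (x : eLast X) : eLast Y :=
  exist _ (hS f (sval x)) (@eS_pf X Y f (sval x) (fun n => n == i) (proj2_sig x)).
pose gL (y : eLast Y) : eLast X :=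
  exist _ (hSinv f (sval y)) (@eS_pf' X Y f (sval y) (fun n => n == i) (proj2_sig y)).
pose fP (u : eP X) : eP Y := match u with inl p => inl (hP f p) | inr x => inr (fL x) end.
pose gP (u : eP Y) : eP X := match u with inl p => inl (hPinv f p) | inr x => inr (gL x) end.
refine (@Build_BHom i j (eObj X) (eObj Y) fS gS _ _ _ fP gP _ _ _ _).
- by move=> x; apply: sig_eqE; rewrite /= hS_K.
- by move=> x; apply: sig_eqE; rewrite /= hS_K'.
- by move=> x; apply: ord_inj; rewrite /= hS_a.
- case=> [p|x] /=; [by rewrite hP_K|by congr inr; apply: sig_eqE; rewrite /= hS_K].
- case=> [p|x] /=; [by rewrite hP_K'|by congr inr; apply: sig_eqE; rewrite /= hS_K'].
- by case=> [p|x] //=; rewrite hP_b.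
- case=> [p|x] [q|y] //=; first by rewrite hP_le.
  apply/eqP/eqP => [H|->] //; apply: sig_eqE.
  by move/(congr1 sval): H => /= /(can_inj (hS_K f)).
Defined.
End ETop.
Arguments eObj {i j} X.
Arguments eHom {i j X Y} f.

Section TTop.
Variables i j : nat.

Definition disc (X : BObj i j) (p : bP X) : bool :=
  ((bB X p : nat) == 0) &&
  [forall q, (q != p) ==> ~~ ble X p q && ~~ ble X q p].
Arguments disc {X} p.

Definition tD (X : BObj i j) : finType := {p : bP X | disc p}.
Definition tS (X : BObj i j) : finType := (bS X + tD X)%type.
Definition tA (X : BObj i j) (u : tS X) : 'I_i.+1 :=
  match u with inl s => widen_ord (leqnSn i) (bA X s) | inr _ => ord_max end.
Definition tP (X : BObj i j) : finType := {p : bP X | ~~ disc p}.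
Definition tle (X : BObj i j) : rel (tP X) := fun u v => ble X (val u) (val v).
Definition tB (X : BObj i j) (u : tP X) : 'I_j.+1 := bB X (val u).

Definition tObj (X : BObj i j) : BObj i.+1 j.
Proof.
refine (@Build_BObj i.+1 j (tS X) (@tA X) (tP X) (@tle X) _ _ _ (@tB X) _).
- by move=> u; apply: ble_refl.
- by move=> u v H; apply: sig_eqE; apply: ble_anti.
- by move=> u v w; apply: ble_trans.
- by move=> u v; apply: bB_mono.
Defined.

Lemma disc_hom (X Y : BObj i j) (f : BHom X Y) p : disc (hP f p) = disc p.
Proof.
rewrite /disc hP_b; congr andb.
apply/forallP/forallP => H q.
- have := H (hP f q); rewrite !hP_le.
  by rewrite (inj_eq (can_inj (hP_K f))).
- have := H (hPinv f q).
  by rewrite -[q](hP_K' f) !hP_le (inj_eq (can_inj (hP_K f))) hP_K.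
Qed.

Lemma disc_hom_inv (X Y : BObj i j) (f : BHom X Y) p : disc (hPinv f p) = disc p.
Proof. by rewrite -(@disc_hom _ _ f) hP_K'. Qed.

Lemma tD_pf (X Y : BObj i j) (f : BHom X Y) (p : bP X) (P : pred bool) :
  P (disc p) -> P (disc (hP f p)).
Proof. by rewrite disc_hom. Qed.
Lemma tD_pf' (X Y : BObj i j) (f : BHom X Y) (p : bP Y) (P : pred bool) :
  P (disc p) -> P (disc (hPinv f p)).
Proof. by rewrite disc_hom_inv. Qed.

Definition tHom (X Y : BObj i j) (f : BHom X Y) : BHom (tObj X) (tObj Y).
Proof.
pose fD (d : tD X) : tD Y :=
  exist _ (hP f (sval d)) (@tD_pf X Y f (sval d) id (proj2_sig d)).
pose gD (d : tD Y) : tD X :=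
  exist _ (hPinv f (sval d)) (@tD_pf' X Y f (sval d) id (proj2_sig d)).
pose fS (u : tS X) : tS Y := match u with inl s => inl (hS f s) | inr d => inr (fD d) end.
pose gS (u : tS Y) : tS X := match u with inl s => inl (hSinv f s) | inr d => inr (gD d) end.
pose fP (p : tP X) : tP Y :=
  exist _ (hP f (sval p)) (@tD_pf X Y f (sval p) negb (proj2_sig p)).
pose gP (p : tP Y) : tP X :=
  exist _ (hPinv f (sval p)) (@tD_pf' X Y f (sval p) negb (proj2_sig p)).
refine (@Build_BHom i.+1 j (tObj X) (tObj Y) fS gS _ _ _ fP gP _ _ _ _).
- case=> [s|d] /=; [by rewrite hS_K|by congr inr; apply: sig_eqE; rewrite /= hP_K].
- case=> [s|d] /=; [by rewrite hS_K'|by congr inr; apply: sig_eqE; rewrite /= hP_K'].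
- by case=> [s|d] //=; apply: ord_inj; rewrite /= hS_a.
- by move=> p; apply: sig_eqE; rewrite /= hP_K.
- by move=> p; apply: sig_eqE; rewrite /= hP_K'.
- by move=> p; exact: hP_b.
- by move=> p q; exact: hP_le.
Defined.
End TTop.
Arguments disc {i j X} p.
Arguments tObj {i j} X.
Arguments tHom {i j X Y} f.

Section HFib.
Variables i j i' j' : nat.
Variable F : BObj i j -> BObj i' j'.
Variable Fh : forall X Y : BObj i j, BHom X Y -> BHom (F X) (F Y).
Variable Y : BObj i' j'.

Record hfib_ob := { hf_X : BObj i j; hf_beta : BHom (F hf_X) Y }.

Definition hfib_hom (u v : hfib_ob) : Type :=
  { a : BHom (hf_X u) (hf_X v) | heq (hcomp (hf_beta v) (Fh _ _ a)) (hf_beta u) }.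

Definition hfib_empty : Prop := hfib_ob -> False.

Definition hfib_contractible : Prop :=
  inhabited hfib_ob /\
  forall u v : hfib_ob, exists a : hfib_hom u v,
    forall b : hfib_hom u v, heq (proj1_sig b) (proj1_sig a).
End HFib.
Arguments hfib_ob {i j i' j'} F Y.
Arguments hfib_hom {i j i' j'} F Fh Y u v.
Arguments hfib_empty {i j i' j'} F Y.
Arguments hfib_contractible {i j i' j'} F Fh Y.

Definition groupoid_mono (i j i' j' : nat) (F : BObj i j -> BObj i' j')
  (Fh : forall X Y : BObj i j, BHom X Y -> BHom (F X) (F Y)) : Prop :=
  forall Y : BObj i' j', hfib_empty F Y \/ hfib_contractible F Fh Y.

From mathcomp Require Import all_boot.
From Stdlib Require Import Classical.

(* The counit eta : e_top (t_top+1 X) ~ X sends the points that t_top+1 moved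
   into the top set layer back to isolated points of the bottom poset layer,
   where they are discrete again.  An isomorphism g : t_top+1 X ~ t_top+1 X'
   preserves the top set layer, hence the split of the poset into its discrete
   and non-discrete parts, so g is t_top+1 of eta o e_top g o eta^-1; and
   t_top+1 is clearly faithful.  A full and faithful functor of groupoids has
   empty or contractible homotopy fibres. *)

Definition hinv (i j : nat) (X Y : BObj i j) (f : BHom X Y) : BHom Y X :=
  @Build_BHom i j Y X (hSinv f) (hS f) (hS_K' f) (hS_K f) (@hS_inv_a _ _ _ _ f)
    (hPinv f) (hP f) (hP_K' f) (hP_K f) (@hP_inv_b _ _ _ _ f) (@hP_inv_le _ _ _ _ f).
Arguments hinv {i j X Y} f.

Section FullyFaithful.
Variables i j i' j' : nat.
Variable F : BObj i j -> BObj i' j'.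
Variable Fh : forall X Y : BObj i j, BHom X Y -> BHom (F X) (F Y).

Hypothesis Fh_full :
  forall X X' (g : BHom (F X) (F X')), exists a : BHom X X', heq (Fh _ _ a) g.
Hypothesis Fh_faithful :
  forall X X' (a b : BHom X X'), heq (Fh _ _ a) (Fh _ _ b) -> heq a b.

Lemma full_faithful_groupoid_mono : groupoid_mono _ _ _ _ F Fh.
Proof.
move=> Y; have [inh|no_ob] := classic (inhabited (hfib_ob F Y)); last first.
  by left=> u; apply: no_ob.
right; split=> // -[X bX] [X' bX'] /=.
have [a [FaS FaP]] := Fh_full _ _ (hcomp (hinv bX') bX).
have a_over : heq (hcomp bX' (Fh _ _ a)) bX.
  by split=> x /=; rewrite ?FaS ?FaP /= ?hS_K' ?hP_K'.
exists (exist _ a a_over) => -[b [b_overS b_overP]] /=; apply: Fh_faithful.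
split=> x; rewrite ?FaS ?FaP /=.
- by apply: (can_inj (hS_K bX')); rewrite hS_K'; apply: b_overS.
- by apply: (can_inj (hP_K bX')); rewrite hP_K'; apply: b_overP.
Qed.

End FullyFaithful.

Section TopDegeneracy.
Variables i j : nat.

Lemma ble_discl (X : BObj i j) (p q : bP X) : disc p -> ble X p q = (p == q).
Proof.
case/andP=> _ /forallP isolated; have [->|ne] := eqVneq p q; first exact: ble_refl.
by have /implyP := isolated q; rewrite eq_sym ne => /(_ isT) /andP[/negbTE].
Qed.

Lemma ble_discr (X : BObj i j) (p q : bP X) : disc q -> ble X p q = (p == q).
Proof.
case/andP=> _ /forallP isolated; have [->|ne] := eqVneq p q; first exact: ble_refl.
by have /implyP := isolated p; rewrite ne => /(_ isT) /andP[_ /negbTE].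
Qed.

Lemma disc_layer0 (X : BObj i j) (p : bP X) : disc p -> bB X p = ord0.
Proof. by case/andP=> /eqP layer0 _; apply: ord_inj. Qed.

Section Counit.
Variable X : BObj i j.

Definition eta_set (x : eS i j (tObj X)) : bS X :=
  match val x as u return (bA (tObj X) u : nat) < i -> bS X with
  | inl s => fun _ => s
  | inr _ => fun top_lt => False_rect _ (elimF idP (ltnn i) top_lt)
  end (valP x).

Definition eta_set_inv (s : bS X) : eS i j (tObj X) :=
  exist _ (inl s) (ltn_ord (bA X s)).

Definition eta_poset (u : eP i j (tObj X)) : bP X :=
  match u with
  | inl q => val q
  | inr x =>
    match val x as v return (bA (tObj X) v : nat) == i -> bP X with
    | inl s => fun top => False_rect _ (elimF idP (ltn_eqF (ltn_ord (bA X s))) top)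
    | inr d => fun _ => val d
    end (valP x)
  end.

Definition eta_poset_inv (p : bP X) : eP i j (tObj X) :=
  match sumbool_of_bool (disc p) with
  | left pd => inr (exist _ (inr (exist _ p pd)) (eqxx i))
  | right npd => inl (exist _ p (negbT npd))
  end.

Lemma eta_set_inl x : inl (eta_set x) = val x.
Proof. by case: x => -[s|d] top_lt //; exfalso; move: top_lt; rewrite /= ltnn. Qed.

Lemma eta_setK : cancel eta_set eta_set_inv.
Proof. by move=> x; apply: sig_eqE; exact: eta_set_inl. Qed.

Lemma eta_set_invK : cancel eta_set_inv eta_set.
Proof. by []. Qed.

Lemma eta_set_layer x : bA X (eta_set x) = bA (eObj (tObj X)) x.
Proof. by apply: ord_inj; case: x (eta_set_inl x) => -[s|d] top_lt // [->]. Qed.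

Lemma eta_poset_inv_disc p (pd : disc p) :
  eta_poset_inv p = inr (exist _ (inr (exist _ p pd)) (eqxx i)).
Proof.
rewrite /eta_poset_inv; case: sumbool_of_bool => [pd'|npd].
- by rewrite (bool_irrelevance pd' pd).
- by exfalso; rewrite pd in npd.
Qed.

Lemma eta_poset_inv_ndisc p (npd : ~~ disc p) :
  eta_poset_inv p = inl (exist _ p npd).
Proof.
rewrite /eta_poset_inv; case: sumbool_of_bool => [pd|npd'].
- by exfalso; rewrite pd in npd.
- by rewrite (bool_irrelevance (negbT npd') npd).
Qed.

Lemma eta_poset_inr (x : eLast i j (tObj X)) (pd : disc (eta_poset (inr x))) :
  inr (exist _ (eta_poset (inr x)) pd) = val x.
Proof.
case: x pd => -[s|[p pd']] top pd; first by exfalso; clear pd; move: top; rewrite /= ltn_eqF.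
by congr inr; apply: sig_eqE.
Qed.

Lemma eta_posetK : cancel eta_poset eta_poset_inv.
Proof.
case=> [[p npd]|x]; first exact: eta_poset_inv_ndisc.
case: x => -[s|[p pd]] top; first by exfalso; move: top; rewrite /= ltn_eqF.
by rewrite /= (eta_poset_inv_disc _ pd); congr inr; apply: sig_eqE.
Qed.

Lemma eta_poset_invK : cancel eta_poset_inv eta_poset.
Proof.
move=> p; have [pd|npd] := boolP (disc p).
- by rewrite (eta_poset_inv_disc _ pd).
- by rewrite (eta_poset_inv_ndisc _ npd).
Qed.

Lemma eta_poset_disc x : disc (eta_poset (inr x)).
Proof. by case: x => -[s|[p pd]] top //; exfalso; move: top; rewrite /= ltn_eqF. Qed.

Lemma eta_poset_layer u : bB X (eta_poset u) = bB (eObj (tObj X)) u.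
Proof. by case: u => [//|x]; rewrite disc_layer0 ?eta_poset_disc. Qed.

Lemma eta_poset_le u v : ble X (eta_poset u) (eta_poset v) = ble (eObj (tObj X)) u v.
Proof.
have eta_inj := can_inj eta_posetK.
case: u v => [q|x] [q'|y] //.
- by rewrite (ble_discr _ _ _ (eta_poset_disc y)) (inj_eq eta_inj).
all: by rewrite (ble_discl _ _ _ (eta_poset_disc x)) (inj_eq eta_inj).
Qed.

Definition eta : BHom (eObj (tObj X)) X :=
  @Build_BHom i j (eObj (tObj X)) X eta_set eta_set_inv eta_setK eta_set_invK
    eta_set_layer eta_poset eta_poset_inv eta_posetK eta_poset_invK
    eta_poset_layer eta_poset_le.

End Counit.

Lemma eta_natural (X Y : BObj i j) (f : BHom X Y) :
  heq (hcomp (eta Y) (eHom (tHom f))) (hcomp f (eta X)).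
Proof.
split.
  by case=> -[s|d] top_lt //=; exfalso; move: top_lt; rewrite /= ltnn.
by case=> [q|[[s|d] top]] //=; exfalso; move: top; rewrite /= ltn_eqF.
Qed.

Lemma tHom_faithful (X X' : BObj i j) (a b : BHom X X') :
  heq (tHom a) (tHom b) -> heq a b.
Proof.
case=> tS_eq tP_eq; split=> [s|p]; first by case: (tS_eq (inl s)).
have [pd|npd] := boolP (disc p).
- by case: (tS_eq (inr (exist _ p pd))).
- by case: (tP_eq (exist _ p npd)).
Qed.

Lemma tHom_full (X X' : BObj i j) (g : BHom (tObj X) (tObj X')) :
  heq (tHom (hcomp (eta X') (hcomp (eHom g) (hinv (eta X))))) g.
Proof.
(* The discreteness proofs are generalized so that eta_poset_inv p can be rewritten. *)
split=> [[s|[p pd]]|[p npd]] /=.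
- exact: eta_set_inl.
- move: (tD_pf _ _ _ _ _ _ _ _) => /=; rewrite (eta_poset_inv_disc _ _ pd).
  exact: eta_poset_inr.
- move: (tD_pf _ _ _ _ _ _ _ _) => /=; rewrite (eta_poset_inv_ndisc _ _ npd) => npd'.
  exact: sig_eqE.
Qed.

End TopDegeneracy.

Theorem lemma3p2 (i j : nat) :
  (* t_{top+1} is a section of e_top = e_{i+1} : B_{i+1,j} -> B_{i,j}
     (e_top o t_{top+1} is naturally isomorphic to the identity) *)
  (exists eta : forall X : BObj i j, BHom (eObj (tObj X)) X,
     forall (X Y : BObj i j) (f : BHom X Y),
       heq (hcomp (eta Y) (eHom (tHom f))) (hcomp f (eta X)))
  /\
  (* t_{top+1} : B_{i,j} -> B_{i+1,j} is a monomorphism of groupoids *)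
  @groupoid_mono i j i.+1 j (@tObj i j) (fun X Y (f : BHom X Y) => tHom f).
Proof.
split; first by exists (@eta i j); apply: eta_natural.
apply: full_faithful_groupoid_mono => [X X' g|X X' a b]; last exact: tHom_faithful.
by eexists; apply: tHom_full.
Qed.
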